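(* Let $\mathcal{M}$ be the set of compactly supported probability distributions on $\mathbb{R}$ and let $\mathcal{D}^R=\{T_d: d \text{ a right-continuous distortion function}\}$. Let $T:\mathcal{M}\to\mathcal{M}$ be monotone. Then $\mathcal{D}^R\circ T=T\circ\mathcal{D}^R$ if and only if $T=T_d\circ T^u$ for some increasing left-continuous function $u:\mathbb{R}\to\mathbb{R}$ and some strictly increasing continuous distortion function $d$.
   Context: Increasing means non-decreasing. A distortion function is an increasing function $d:[0,1]\to[0,1]$ with $d(0)=0$, $d(1)=1$. $T_d(F)(x)=\lim_{y\downarrow x}d(F(y))$. For an increasing function $u:\mathbb{R}\to\mathbb{R}$, $T^u(F)=F\circ u^{-1}$ is the distribution of $u(X)$ when $X\sim F$. For a set $\mathcal{T}$ of maps $\mathcal{M}\to\mathcal{M}$, $\mathcal{T}\circ T=\{T'\circ T:T'\in\mathcal{T}\}$ and $T\circ\mathcal{T}=\{T\circ T':T'\in\mathcal{T}\}$. For $F,G\in\mathcal{M}$, $F\le_{\rm st}G$ means $F(x)\ge G(x)$ for all $x$; $T$ is monotone if $F\le_{\rm st}G$ implies $T(F)\le_{\rm st}T(G)$. *)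

From HB Require Import structures.
From mathcomp Require Import all_boot all_order all_algebra.
From mathcomp Require Import all_classical all_reals all_analysis.
Set Implicit Arguments. Unset Strict Implicit. Unset Printing Implicit Defensive.
Import Order.TTheory GRing.Theory Num.Theory.
Import numFieldNormedType.Exports.
Local Open Scope classical_set_scope.
Local Open Scope ring_scope.

Section Defs.
Variable R : realType.

Definition increasing (f : R -> R) : Prop := forall x y, x <= y -> f x <= f y.

(* Distribution functions (CDFs) of compactly supported probability
   distributions on R: the set M. *)
Definition inM (F : R -> R) : Prop :=
  increasing F /\
  (forall x, F y @[y --> x^'+] --> F x) /\
  exists a b : R, (forall x, x < a -> F x = 0) /\ (forall x, b <= x -> F x = 1).

Definition le_st (F G : R -> R) : Prop := forall x, G x <= F x.

Definition monotone_map (T : (R -> R) -> (R -> R)) : Prop :=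
  forall F G, inM F -> inM G -> le_st F G -> le_st (T F) (T G).

(* distortion function d : [0,1] -> [0,1] (values of d outside [0,1] are
   irrelevant) *)
Definition distortion (d : R -> R) : Prop :=
  (forall x y, 0 <= x -> x <= y -> y <= 1 -> d x <= d y) /\
  (forall x, 0 <= x <= 1 -> 0 <= d x <= 1) /\
  d 0 = 0 /\ d 1 = 1.

Definition right_cont_distortion (d : R -> R) : Prop :=
  distortion d /\ (forall x, 0 <= x < 1 -> d y @[y --> x^'+] --> d x).

Definition strict_cont_distortion (d : R -> R) : Prop :=
  distortion d /\
  (forall x y, 0 <= x -> x < y -> y <= 1 -> d x < d y) /\
  {within `[0, 1], continuous d}.

Definition Td (d : R -> R) (F : R -> R) : R -> R :=
  fun x => lim (d (F y) @[y --> x^'+]).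

(* T^u(F) = F o u^{-1} = distribution function of u(X), X ~ F:
   T^u(F)(y) = P(u(X) <= y) = P(X in {x | u x <= y}); since {x | u x <= y}
   is a down-set, its probability is sup_{u x <= y} F x (sup of empty = 0). *)
Definition Tu (u : R -> R) (F : R -> R) : R -> R :=
  fun y => sup [set F x | x in [set x | u x <= y]].

End Defs.

From HB Require Import structures.
From mathcomp Require Import all_boot all_order all_algebra.
From mathcomp Require Import all_classical all_reals all_analysis.
From mathcomp Require Import lra.
Import Order.TTheory GRing.Theory Num.Theory.
Import numFieldNormedType.Exports.
Local Open Scope classical_set_scope.
Local Open Scope ring_scope.

(* Monotonicity together with commutation with the two-valued distortions
   forces T to map point masses to point masses, [T delta_x = delta_(u x)],
   and two-point laws to two-point laws: mass p at a and 1 - p at b is sent to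
   mass d p at u a and 1 - d p at u b, for a single strictly increasing
   bijection d of [0, 1].  Sandwiching an arbitrary F between two-point laws
   gives [T F = d o (F o u^-1)], and applying this to a uniform law shows that
   u cannot jump from the left.  Conversely T^u commutes with every
   distortion and d is invertible, so [T_h o T = T o T_(d^-1 o h o d)]. *)

Section one_sided_limits.
Context {R : realType}.
Implicit Types (f : R -> R) (x l : R).

Lemma cvg_at_right_distP f x l : f y @[y --> x^'+] --> l <->
  forall e, 0 < e -> exists2 d, 0 < d & forall y, x < y < x + d -> `|f y - l| < e.
Proof.
rewrite cvgrPdistC_lt; split.
- move=> fl e e0; have := fl e e0.
  rewrite /at_right near_withinE => /nbhs_ballP [d d0 xdl].
  exists d => // y /andP[xy yd]; apply: xdl => //.
  by rewrite /ball /= ltr0_norm ?subr_lt0 // opprB ltrBlDl.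
- move=> fl e e0; have [d d0 xdl] := fl e e0; rewrite /at_right near_withinE.
  apply/nbhs_ballP; exists d => // y; rewrite /ball /= => xyd xy; apply: xdl.
  by rewrite xy /=; move: xyd; rewrite ltr0_norm ?subr_lt0 // opprB ltrBlDl.
Qed.

Lemma cvg_at_left_distP f x l : f y @[y --> x^'-] --> l <->
  forall e, 0 < e -> exists2 d, 0 < d & forall y, x - d < y < x -> `|f y - l| < e.
Proof.
rewrite cvgrPdistC_lt; split.
- move=> fl e e0; have := fl e e0.
  rewrite /at_left near_withinE => /nbhs_ballP [d d0 xdl].
  exists d => // y /andP[xy yd]; apply: xdl => //.
  by rewrite /ball /= gtr0_norm ?subr_gt0 // ltrBlDr -ltrBlDl.
- move=> fl e e0; have [d d0 xdl] := fl e e0; rewrite /at_left near_withinE.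
  apply/nbhs_ballP; exists d => // y; rewrite /ball /= => xyd xy; apply: xdl.
  by rewrite xy andbT; move: xyd; rewrite gtr0_norm ?subr_gt0 // ltrBlDr -ltrBlDl.
Qed.

Lemma cvg_at_right_locally_cst f x d : 0 < d ->
  (forall y, x < y < x + d -> f y = f x) -> f y @[y --> x^'+] --> f x.
Proof.
move=> d0 fxd; apply/cvg_at_right_distP => e e0; exists d => // y xy.
by rewrite fxd // subrr normr0.
Qed.

End one_sided_limits.

Section distribution_functions.
Context {R : realType}.
Implicit Types (F : R -> R) (p q a b c x t : R).

Lemma inM_01 {F} : inM F -> forall x, 0 <= F x <= 1.
Proof.
move=> [Fi [_ [a [b [Fa Fb]]]]] x; apply/andP; split.
  rewrite -(Fa (Num.min x (a - 1))); first by apply: Fi; rewrite ge_min lexx.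
  by rewrite gt_min; apply/orP; right; lra.
by rewrite -(Fb (Num.max x b)) ?le_max ?lexx ?orbT //; apply: Fi; rewrite le_max lexx.
Qed.

Definition twopt p a b : R -> R :=
  fun t => if t < a then 0 else if t < b then p else 1.

Definition dirac_cdf c : R -> R := fun t => if t < c then 0 else 1.

Lemma twopt_lo p a b t : t < a -> twopt p a b t = 0.
Proof. by rewrite /twopt => ->. Qed.

Lemma twopt_mid p a b t : a <= t < b -> twopt p a b t = p.
Proof. by rewrite /twopt => /andP[ta ->]; rewrite ltNge ta. Qed.

Lemma twopt_hi p a b t : a <= b -> b <= t -> twopt p a b t = 1.
Proof. by move=> ab bt; rewrite /twopt !ltNge bt (le_trans ab bt). Qed.

Lemma twopt_same p c : twopt p c c = dirac_cdf c.
Proof. by apply/funext => t; rewrite /twopt /dirac_cdf; do 2?case: ifP. Qed.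

Lemma twopt1 a b : twopt 1 a b = dirac_cdf a.
Proof. by apply/funext => t; rewrite /twopt /dirac_cdf; do 2?case: ifP. Qed.

Lemma twopt0 a b : a <= b -> twopt 0 a b = dirac_cdf b.
Proof.
move=> ab; apply/funext => t; rewrite /twopt /dirac_cdf.
by case: (ltP t a); case: (ltP t b) => // *; lra.
Qed.

Lemma twopt_comp (h : R -> R) p a b : h 0 = 0 -> h 1 = 1 ->
  h \o twopt p a b = twopt (h p) a b.
Proof. by move=> h0 h1; apply/funext => t; rewrite /twopt /=; do 2?case: ifP. Qed.

Lemma dirac_comp (h : R -> R) c : h 0 = 0 -> h 1 = 1 -> h \o dirac_cdf c = dirac_cdf c.
Proof. by move=> h0 h1; rewrite -(twopt_same 0 c) twopt_comp // h0. Qed.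

Lemma twopt_le p q a b t : p <= q -> twopt p a b t <= twopt q a b t.
Proof. by move=> pq; rewrite /twopt; do 2?case: ifP. Qed.

Lemma inM_twopt p a b : 0 <= p <= 1 -> inM (twopt p a b).
Proof.
move=> /andP[p0 p1]; split.
  move=> x y xy; rewrite /twopt.
  by case: (ltP x a); case: (ltP y a); case: (ltP x b); case: (ltP y b) => *; lra.
split.
  move=> x; apply: (@cvg_at_right_locally_cst _ _ x
    (if x < a then a - x else if x < b then b - x else 1)).
    by case: (ltP x a); case: (ltP x b) => *; lra.
  move=> y /andP[xy]; rewrite /twopt.
  by case: (ltP x a); case: (ltP x b); case: (ltP y a); case: (ltP y b) => *; lra.
exists a, (Num.max a b); split => x; first by rewrite /twopt => ->.
rewrite ge_max /twopt => /andP[ax bx].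
by case: (ltP x a); case: (ltP x b) => *; lra.
Qed.

Lemma inM_dirac c : inM (dirac_cdf c).
Proof. by rewrite -(twopt_same 0); apply: inM_twopt; rewrite lexx ler01. Qed.

Lemma zero_one_cdf F : inM F -> (forall t, F t = 0 \/ F t = 1) ->
  exists c, F = dirac_cdf c.
Proof.
move=> FM F01; have [Fi [Frc [a [b [Fa Fb]]]]] := FM.
pose Z := [set t | F t = 0].
have Zb : ubound Z b.
  move=> t; rewrite /Z /= => Ft0; rewrite leNgt; apply/negP => bt.
  by move: Ft0; rewrite Fb ?(ltW bt) //; apply/eqP; rewrite oner_eq0.
have Z0 : Z !=set0 by exists (a - 1); rewrite /Z /= Fa //; lra.
exists (sup Z); apply/funext => t; rewrite /dirac_cdf.
case: (ltP t (sup Z)) => tZ.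
  have [z Zz tz] := sup_gt Z0 tZ.
  apply/eqP; rewrite eq_le (andP (inM_01 FM t)).1 andbT -Zz; exact/Fi/ltW.
case: (F01 t) => // Ft0; exfalso.
have /cvg_at_right_distP/(_ (1/2)) [|d d0 Fd] := Frc t; first lra.
have td : t < t + d / 2 < t + d by apply/andP; split; lra.
case: (F01 (t + d / 2)) => [Z1|F1].
  by have := ub_le_sup (ex_intro _ b Zb) Z1; lra.
by have := Fd _ td; rewrite F1 Ft0 subr0 normr1; lra.
Qed.

Definition left_lim F x := sup [set F t | t in [set t | t < x]].

Lemma left_lim_ge {F x t} : inM F -> t < x -> F t <= left_lim F x.
Proof.
move=> FM tx; apply: ub_le_sup; last by exists t.
by exists 1 => _ [z _ <-]; have /andP[] := inM_01 FM z.
Qed.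

Lemma left_lim_le F x c : (forall t, t < x -> F t <= c) -> left_lim F x <= c.
Proof.
move=> Fc; apply: ge_sup; first by exists (F (x - 1)), (x - 1) => //=; lra.
by move=> _ [t tx <-]; exact: Fc.
Qed.

Lemma left_lim_01 {F} : inM F -> forall x, 0 <= left_lim F x <= 1.
Proof.
move=> FM x; apply/andP; split; last by apply: left_lim_le => t _; have /andP[] := inM_01 FM t.
have x1 : x - 1 < x by lra.
exact: le_trans (andP (inM_01 FM (x - 1))).1 (left_lim_ge FM x1).
Qed.

Definition unif_cdf x : R -> R :=
  fun t => if t < x - 1 then 0 else if t < x then t - x + 1 else 1.

Lemma unif_cdf_lipschitz x t y : t <= y -> 0 <= unif_cdf x y - unif_cdf x t <= y - t.
Proof.
move=> ty; rewrite /unif_cdf.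
by case: (ltP t (x - 1)); case: (ltP y (x - 1)); case: (ltP t x); case: (ltP y x) => *;
  apply/andP; split; lra.
Qed.

Lemma inM_unif x : inM (unif_cdf x).
Proof.
split; first by move=> t y /(unif_cdf_lipschitz x _ _) /andP[+ _]; rewrite subr_ge0.
split.
  move=> t; apply/cvg_at_right_distP => e e0; exists e => // y /andP[ty ye].
  have /andP[h1 h2] := unif_cdf_lipschitz x _ _ (ltW ty).
  by rewrite ger0_norm //; lra.
exists (x - 1), x; split => t ht; rewrite /unif_cdf; first by rewrite ht.
by rewrite ltNge (le_trans _ ht) /= ?ltNge ?ht //; lra.
Qed.

End distribution_functions.

Section distortions.
Context {R : realType}.
Implicit Types (d g h k F G : R -> R) (x y p s v c : R).

Lemma cvg_at_right_distortion_comp h k x : right_cont_distortion h ->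
  0 <= k x <= 1 -> (exists2 r, 0 < r & forall y, x < y < x + r -> k x <= k y <= 1) ->
  k y @[y --> x^'+] --> k x -> h (k y) @[y --> x^'+] --> h (k x).
Proof.
move=> [_ hrc] /andP[kx0 kx1] [r r0 kr] krc; apply/cvg_at_right_distP => e e0.
have [kxE|kx_neq1] := eqVneq (k x) 1.
  exists r => // y /kr; rewrite kxE => /andP[ky1 ky1'].
  have -> : k y = 1 by apply/eqP; rewrite eq_le ky1 ky1'.
  by rewrite subrr normr0.
have kx01 : 0 <= k x < 1 by rewrite kx0 lt_neqAle kx_neq1.
have /cvg_at_right_distP/(_ e e0) [r1 r10 hr1] := hrc _ kx01.
have /cvg_at_right_distP/(_ r1 r10) [r2 r20 kr2] := krc.
exists (Num.min r r2); first by rewrite lt_min r0.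
move=> y /andP[xy]; rewrite -ltrBlDl lt_min => /andP[yr yr2].
have hy : x < y < x + r by apply/andP; split; lra.
have hy2 : x < y < x + r2 by apply/andP; split; lra.
have /andP[kxy _] := kr y hy.
move: kxy; rewrite le_eqVlt => /orP[/eqP <-|kxy]; first by rewrite subrr normr0.
have := kr2 y hy2; rewrite gtr0_norm ?subr_gt0 // => kyr1.
by apply: hr1; apply/andP; split; lra.
Qed.

Lemma cdf_distortion_right_cont d G x : right_cont_distortion d ->
  (forall y, 0 <= G y <= 1) -> increasing G -> G y @[y --> x^'+] --> G x ->
  d (G y) @[y --> x^'+] --> d (G x).
Proof.
move=> hd G01 Gi Grc; apply: cvg_at_right_distortion_comp => //.
exists 1 => // y /andP[xy _].
by rewrite (andP (G01 y)).2 andbT; apply/Gi/ltW.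
Qed.

Lemma TdE d G x : right_cont_distortion d -> (forall y, 0 <= G y <= 1) ->
  increasing G -> G y @[y --> x^'+] --> G x -> Td d G x = d (G x).
Proof. by move=> *; apply: cvg_lim => //; apply: cdf_distortion_right_cont. Qed.

Lemma inM_comp {d F} : right_cont_distortion d -> inM F -> inM (d \o F).
Proof.
move=> hd FM; have [[dm [_ [d0 d1]]] _] := hd.
have [Fi [Frc [a [b [Fa Fb]]]]] := FM.
split.
  move=> x y xy /=; apply: dm; [exact: (andP (inM_01 FM x)).1|exact: Fi|].
  exact: (andP (inM_01 FM y)).2.
split; first by move=> x; exact: cdf_distortion_right_cont hd (inM_01 FM) Fi (Frc x).
by exists a, b; split => x hx /=; [rewrite Fa | rewrite Fb].
Qed.

Lemma Td_inM {d F} : right_cont_distortion d -> inM F -> Td d F = d \o F.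
Proof.
move=> hd FM; have [Fi [Frc _]] := FM.
by apply/funext => x; exact: TdE hd (inM_01 FM) Fi (Frc x).
Qed.

Lemma right_cont_distortion_twopt v c : 0 < c <= 1 -> 0 <= v <= 1 ->
  right_cont_distortion (twopt v c 1).
Proof.
move=> /andP[c0 c1] v01; have PM := inM_twopt v c 1 v01.
have [Pi [Prc _]] := PM.
split=> [|x _]; last exact: Prc.
split; first by move=> x y _ xy _; exact: Pi.
split; first by move=> x _; exact: inM_01 PM x.
by split; rewrite /twopt ?c0 // ltxx ltNge c1.
Qed.

Lemma right_cont_distortion_comp {h k} : right_cont_distortion h ->
  right_cont_distortion k -> right_cont_distortion (h \o k).
Proof.
move=> hh hk; have [[hm [h01 [h0 h1]]] _] := hh; have [[km [k01 [k0 k1]]] krc] := hk.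
have k01' x : 0 <= x -> x <= 1 -> 0 <= k x <= 1 by move=> x0 x1; apply: k01; rewrite x0.
split.
  split.
    move=> x y x0 xy y1; apply: hm.
    - by have /andP[] := k01' x x0 (le_trans xy y1).
    - exact: km.
    - by have /andP[] := k01' y (le_trans x0 xy) y1.
  by split=> [x /k01 /h01 //|]; rewrite /= k0 k1.
move=> x /andP[x0 x1]; apply: (cvg_at_right_distortion_comp h k x hh).
- by apply: k01'; lra.
- exists (1 - x); first lra.
  move=> y /andP[xy yx]; apply/andP; split; first by apply: km; lra.
  by have /andP[_ ->] // : 0 <= k y <= 1 by apply: k01'; lra.
- by apply: krc; rewrite x0.
Qed.

Section onto_distortion.
Variable d : R -> R.
Hypothesis dd : distortion d.
Hypothesis d_onto : forall s, 0 <= s <= 1 -> exists2 r, 0 <= r <= 1 & d r = s.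

Lemma onto_distortion_right_cont x : 0 <= x < 1 -> d y @[y --> x^'+] --> d x.
Proof.
have [dm [d01 _]] := dd; move=> /andP[x0 x1].
have d01' y : 0 <= y -> y <= 1 -> 0 <= d y <= 1 by move=> y0 y1; apply: d01; rewrite y0.
have /andP[dx0 dx1] := d01' x x0 (ltW x1).
apply/cvg_at_right_distP => e e0.
have [dxE|dx_neq1] := eqVneq (d x) 1.
  exists (1 - x); first lra.
  move=> y /andP[xy yx]; have y1 : y <= 1 by lra.
  have dxy := dm _ _ x0 (ltW xy) y1.
  have /andP[_ dy1] := d01' y (le_trans x0 (ltW xy)) y1.
  by rewrite ger0_norm; lra.
have [z /andP[dxz z1] ze] : exists2 z, d x < z <= 1 & z - d x < e.
  have [dxe|dxe] := leP (d x + e / 2) 1.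
    by exists (d x + e / 2); [apply/andP; split|]; lra.
  by exists 1; [apply/andP; split|]; lra.
have [w /andP[w0 w1] dw] : exists2 w, 0 <= w <= 1 & d w = z.
  by apply: d_onto; apply/andP; split; lra.
have xw : x < w by rewrite ltNge; apply/negP => wx; have := dm _ _ w0 wx (ltW x1); lra.
exists (w - x); first lra.
move=> y /andP[xy]; rewrite subrKC => yw; have y0 : 0 <= y by lra.
have dxy := dm _ _ x0 (ltW xy) (le_trans (ltW yw) w1).
have dyw := dm _ _ y0 (ltW yw) w1.
by rewrite ger0_norm; lra.
Qed.

Lemma onto_distortion_left_cont x : 0 < x <= 1 -> d y @[y --> x^'-] --> d x.
Proof.
have [dm [d01 _]] := dd; move=> /andP[x0 x1].
have d01' y : 0 <= y -> y <= 1 -> 0 <= d y <= 1 by move=> y0 y1; apply: d01; rewrite y0.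
have /andP[dx0 dx1] := d01' x (ltW x0) x1.
apply/cvg_at_left_distP => e e0.
have [dxE|dx_neq0] := eqVneq (d x) 0.
  exists x => // y /andP[xy yx]; have y0 : 0 <= y by lra.
  have dyx := dm _ _ y0 (ltW yx) x1.
  have /andP[dy0 _] := d01' y y0 (le_trans (ltW yx) x1).
  by rewrite ler0_norm; lra.
have [z /andP[z0 zdx] ze] : exists2 z, 0 <= z < d x & d x - z < e.
  have [dxe|dxe] := leP 0 (d x - e / 2).
    by exists (d x - e / 2); [apply/andP; split|]; lra.
  by exists 0; [apply/andP; split|]; lra.
have [w /andP[w0 w1] dw] : exists2 w, 0 <= w <= 1 & d w = z.
  by apply: d_onto; apply/andP; split; lra.
have wx : w < x by rewrite ltNge; apply/negP => xw; have := dm _ _ (ltW x0) xw w1; lra.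
exists (x - w); first lra.
move=> y /andP[+ yx]; rewrite opprB subrKC => wy; have y1 : y <= 1 by lra.
have dyx := dm _ _ (le_trans w0 (ltW wy)) (ltW yx) x1.
have dwy := dm _ _ w0 (ltW wy) y1.
by rewrite ler0_norm; lra.
Qed.

Lemma onto_distortion_continuous : {within `[0, 1], continuous d}.
Proof.
apply/continuous_within_itvP; first exact: ltr01.
split.
- move=> x; rewrite in_itv /= => /andP[x0 x1]; apply/left_right_continuousP; split.
    by apply: onto_distortion_left_cont; rewrite x0 (ltW x1).
  by apply: onto_distortion_right_cont; rewrite (ltW x0) x1.
- by apply: onto_distortion_right_cont; rewrite lexx ltr01.
- by apply: onto_distortion_left_cont; rewrite lexx ltr01.
Qed.

End onto_distortion.

Lemma strict_cont_distortion_onto {d} : strict_cont_distortion d ->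
  forall s, 0 <= s <= 1 -> exists2 r, 0 <= r <= 1 & d r = s.
Proof.
move=> [[_ [_ [d0 d1]]] [_ dc]] s s01.
have s_betw : Num.min (d 0) (d 1) <= s <= Num.max (d 0) (d 1).
  by rewrite d0 d1 (min_l ler01) (max_r ler01).
by have [r] := IVT ler01 dc s_betw; rewrite in_itv /=; exists r.
Qed.

Lemma strict_cont_distortion_right_cont {d} :
  strict_cont_distortion d -> right_cont_distortion d.
Proof.
move=> hd; have [dd _] := hd; split => //.
by apply: onto_distortion_right_cont => //; exact: strict_cont_distortion_onto.
Qed.

Lemma strict_cont_distortion_inv {d} : strict_cont_distortion d ->
  exists g, [/\ right_cont_distortion g,
    forall s, 0 <= s <= 1 -> d (g s) = s & forall x, 0 <= x <= 1 -> g (d x) = x].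
Proof.
move=> hd; have [[dm [d01 [d0 d1]]] [ds _]] := hd.
have /choice [g gP] : forall s, exists x, 0 <= s <= 1 -> 0 <= x <= 1 /\ d x = s.
  move=> s; have [s01|] := pselect (0 <= s <= 1); last by exists 0.
  by have [r ? ?] := strict_cont_distortion_onto hd _ s01; exists r.
have d_inj x y : 0 <= x <= 1 -> 0 <= y <= 1 -> d x = d y -> x = y.
  move=> /andP[x0 x1] /andP[y0 y1] dxy; apply/eqP; rewrite eq_le !leNgt.
  apply/andP; split; apply/negP => lt.
    by have := ds _ _ y0 lt x1; rewrite dxy ltxx.
  by have := ds _ _ x0 lt y1; rewrite dxy ltxx.
have gd x : 0 <= x <= 1 -> g (d x) = x.
  by move=> x01; have [g01 dg] := gP _ (d01 _ x01); apply: d_inj.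
have dg s : 0 <= s <= 1 -> d (g s) = s by move=> /gP[].
have g_dist : distortion g.
  split.
    move=> p q p0 pq q1; rewrite leNgt; apply/negP => gqp.
    have p01 : 0 <= p <= 1 by apply/andP; split; lra.
    have q01 : 0 <= q <= 1 by apply/andP; split; lra.
    have [/andP[gq0 _] _] := gP q q01; have [/andP[_ gp1] _] := gP p p01.
    by have := ds _ _ gq0 gqp gp1; rewrite !dg //; lra.
  split; first by move=> s /gP[].
  have h0 : 0 <= (0 : R) <= 1 by rewrite lexx ler01.
  have h1 : 0 <= (1 : R) <= 1 by rewrite lexx ler01.
  by split; [rewrite -{1}d0 gd | rewrite -{1}d1 gd].
exists g; split => //; split => // x x01.
apply: onto_distortion_right_cont => // s s01.
by exists (d s); [exact: d01 | exact: gd].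
Qed.

End distortions.

Section push_forward.
Context {R : realType}.
Implicit Types (u F G h : R -> R) (x y z t m c : R).

Lemma Tu_ge {u F y x} : inM F -> u x <= y -> F x <= Tu u F y.
Proof.
move=> FM uxy; apply: ub_le_sup; last by exists x.
by exists 1 => _ [z _ <-]; have /andP[] := inM_01 FM z.
Qed.

Lemma Tu_empty u F y : (forall x, y < u x) -> Tu u F y = 0.
Proof.
move=> yu; rewrite /Tu (_ : [set F x | x in _] = set0) ?sup0 //.
by apply/seteqP; split => // _ [x /= ux _]; move: ux; rewrite leNgt yu.
Qed.

Lemma Tu_le u F y c : 0 <= c -> (forall x, u x <= y -> F x <= c) -> Tu u F y <= c.
Proof.
move=> c0 Fc; have [[x ux]|nox] := pselect (exists x, u x <= y).
  by apply: ge_sup; [exists (F x), x | move=> _ [z uz <-]; exact: Fc].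
by rewrite Tu_empty // => x; rewrite ltNge; apply/negP => ux; apply: nox; exists x.
Qed.

Lemma Tu_01 u F y : inM F -> 0 <= Tu u F y <= 1.
Proof.
move=> FM; apply/andP; split; last first.
  by apply: Tu_le => // x _; have /andP[] := inM_01 FM x.
have [[x ux]|nox] := pselect (exists x, u x <= y).
  exact: le_trans (andP (inM_01 FM x)).1 (Tu_ge FM ux).
by rewrite Tu_empty // => x; rewrite ltNge; apply/negP => ux; apply: nox; exists x.
Qed.

Lemma Tu_increasing u {F} : inM F -> increasing (Tu u F).
Proof.
move=> FM y z yz; apply: Tu_le => [|x ux]; first by have /andP[] := Tu_01 u F z FM.
exact: Tu_ge FM (le_trans ux yz).
Qed.

Lemma Tu_max {u F y m} : inM F -> u m <= y -> (forall x, u x <= y -> x <= m) ->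
  Tu u F y = F m.
Proof.
move=> FM um mmax; apply/eqP; rewrite eq_le Tu_ge // andbT.
apply: Tu_le => [|x /mmax]; first by have /andP[] := inM_01 FM m.
by have [Fi _] := FM; exact: Fi.
Qed.

Lemma Tu_one {u F y x} : inM F -> u x <= y -> F x = 1 -> Tu u F y = 1.
Proof.
move=> FM ux Fx1; apply/eqP; rewrite eq_le (andP (Tu_01 u F y FM)).2.
by rewrite -Fx1 Tu_ge.
Qed.

Lemma Tu_le_left {u F y x c} : increasing u -> y < u x -> 0 <= c ->
  (forall t, t < x -> F t <= c) -> Tu u F y <= c.
Proof.
move=> u_incr yx c0 Fc; apply: Tu_le => // t ut; apply: Fc.
by rewrite ltNge; apply/negP => /u_incr xt; lra.
Qed.

Lemma Tu_unif_cdf u x y : (forall t, t < x -> u t <= y) -> Tu u (unif_cdf x) y = 1.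
Proof.
move=> below; have UM := inM_unif x.
have /andP[s0 s1] := Tu_01 u (unif_cdf x) y UM.
apply/eqP; rewrite eq_le s1 leNgt; apply/negP => s_lt1.
pose t := x - (1 - Tu u (unif_cdf x) y) / 2.
have tx : t < x by rewrite /t; lra.
have t1 : x - 1 <= t by rewrite /t; lra.
have := Tu_ge UM (below t tx).
by rewrite /unif_cdf ltNge t1 /= tx /t => ?; lra.
Qed.

Section left_continuous.
Variable u : R -> R.
Hypothesis u_incr : increasing u.
Hypothesis u_lc : forall x, u y @[y --> x^'-] --> u x.

Lemma sublevel_max y : [set x | u x <= y] !=set0 -> has_ubound [set x | u x <= y] ->
  exists m, u m <= y /\ forall x, u x <= y -> x <= m.
Proof.
move=> S0 Sub; exists (sup [set x | u x <= y]); split; last by move=> x; exact: ub_le_sup.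
set m := sup _; rewrite leNgt; apply/negP => ym.
have /cvg_at_left_distP/(_ (u m - y)) [|r r0 ur] := u_lc m; first by rewrite subr_gt0.
have mr : m - r < m by rewrite gtrBl.
have [t /= ut rt] := sup_gt S0 mr.
have tm : t < m.
  rewrite lt_neqAle (ub_le_sup Sub ut) andbT; apply/eqP => tE.
  by move: ut; rewrite tE leNgt ym.
have utm : u t <= u m by exact/u_incr/ltW.
have := ur t; rewrite rt tm ler0_norm ?subr_le0 // => /(_ isT).
by lra.
Qed.

Lemma sublevel_cases F y : inM F ->
  [\/ forall x, y < u x, exists2 x, u x <= y & F x = 1 |
      exists m, u m <= y /\ forall x, u x <= y -> x <= m].
Proof.
move=> FM; have [_ [_ [a [b [_ Fb]]]]] := FM.
have [[x0 ux0]|nox] := pselect (exists x, u x <= y); last first.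
  by apply: Or31 => x; rewrite ltNge; apply/negP => ux; apply: nox; exists x.
have [[x [ux bx]]|bS] := pselect (exists x, u x <= y /\ b <= x).
  by apply: Or32; exists x => //; exact: Fb.
apply: Or33; apply: sublevel_max; first by exists x0.
exists b => x ux; rewrite leNgt; apply/negP => bx.
by apply: bS; exists x; split => //; exact: ltW.
Qed.

Lemma Tu_right_cont F y : inM F -> Tu u F z @[z --> y^'+] --> Tu u F y.
Proof.
move=> FM; have [Fi [Frc [a [_ [Fa _]]]]] := FM.
have [[x ux Fx1]|no1] := pselect (exists2 x, u x <= y & F x = 1).
  apply: (cvg_at_right_locally_cst _ y 1 ltr01) => z /andP[yz _].
  by rewrite (Tu_one FM ux Fx1) (Tu_one FM (le_trans ux (ltW yz)) Fx1).
have above e : 0 < e -> exists2 t, y < u t & F t < Tu u F y + e.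
  move=> e0; case: (sublevel_cases F y FM) => [yu|/no1 //|[m [um mmax]]].
    by exists (a - 1); rewrite ?yu // Fa ?Tu_empty ?add0r //; lra.
  have /cvg_at_right_distP/(_ e e0) [r r0 Fr] := Frc m.
  have mrm : m < m + r / 2 < m + r by apply/andP; split; lra.
  exists (m + r / 2); first by rewrite ltNge; apply/negP => /mmax; lra.
  have Fmr : F m <= F (m + r / 2) by apply/Fi; lra.
  have Fm := Tu_ge FM um.
  by have := Fr _ mrm; rewrite ger0_norm ?subr_ge0 //; lra.
apply/cvg_at_right_distP => e e0; have [t yt Ft] := above e e0.
exists (u t - y); first by rewrite subr_gt0.
move=> z /andP[yz]; rewrite subrKC => zt.
have Tyz := Tu_increasing u FM _ _ (ltW yz).
have Tzt : Tu u F z <= F t.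
  by apply: (Tu_le_left u_incr zt) => [|s /ltW]; [exact: (andP (inM_01 FM t)).1 | exact: Fi].
by rewrite ger0_norm ?subr_ge0 //; lra.
Qed.

Lemma Tu_comp h F y : right_cont_distortion h -> inM F ->
  Tu u (h \o F) y = h (Tu u F y).
Proof.
move=> hh FM; have GM := inM_comp hh FM; have [[_ [_ [h0 h1]]] _] := hh.
case: (sublevel_cases F y FM) => [yu|[x ux Fx1]|[m [um mmax]]].
- by rewrite !Tu_empty.
- by rewrite (Tu_one FM ux Fx1) (Tu_one GM ux) //= Fx1.
- by rewrite (Tu_max GM um mmax) (Tu_max FM um mmax).
Qed.

End left_continuous.
End push_forward.

Section commutation.
Context {R : realType}.
Implicit Types (T : (R -> R) -> (R -> R)).

Definition DT_sub_TD T := forall d, right_cont_distortion d ->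
  exists d', right_cont_distortion d' /\ forall F, inM F -> Td d (T F) = T (Td d' F).

Definition TD_sub_DT T := forall d', right_cont_distortion d' ->
  exists d, right_cont_distortion d /\ forall F, inM F -> Td d (T F) = T (Td d' F).

End commutation.

Section necessity.
Context {R : realType}.
Variable T : (R -> R) -> (R -> R).
Hypothesis TM : forall F, inM F -> inM (T F).
Hypothesis T_mono : monotone_map T.
Hypothesis DT_TD : DT_sub_TD T.
Hypothesis TD_DT : TD_sub_DT T.
Implicit Types (F G d e : R -> R) (a b p q s t x y : R).

Lemma DT_TD_comp {d} : right_cont_distortion d ->
  exists2 d', right_cont_distortion d' & forall F, inM F -> d \o T F = T (d' \o F).
Proof.
move=> hd; have [d' [hd' TdT]] := DT_TD _ hd; exists d' => // F FM.
by rewrite -(Td_inM hd (TM _ FM)) -(Td_inM hd' FM) TdT.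
Qed.

Lemma TD_DT_comp {d'} : right_cont_distortion d' ->
  exists2 d, right_cont_distortion d & forall F, inM F -> d \o T F = T (d' \o F).
Proof.
move=> hd'; have [d [hd TdT]] := TD_DT _ hd'; exists d => // F FM.
by rewrite -(Td_inM hd (TM _ FM)) -(Td_inM hd' FM) TdT.
Qed.

Lemma T_twopt_mono {p q} a b t : 0 <= p <= 1 -> 0 <= q <= 1 -> p <= q ->
  T (twopt p a b) t <= T (twopt q a b) t.
Proof.
move=> p01 q01 pq; apply: (T_mono _ _ (inM_twopt q a b q01) (inM_twopt p a b p01)).
by move=> s; exact: twopt_le.
Qed.

Lemma T_dirac x : exists c, T (dirac_cdf x) = dirac_cdf c.
Proof.
have hd : right_cont_distortion (twopt 0 1 1 : R -> R).
  by apply: (right_cont_distortion_twopt 0 1); rewrite ?ltr01 ?lexx ?ler01.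
have [d' [[_ [_ [d'0 d'1]]] _] dT] := DT_TD_comp hd.
(* Every distortion fixes Dirac laws, so the indicator [twopt 0 1 1] of [{1}]
   fixes [T (dirac_cdf x)], which is therefore [{0, 1}]-valued. *)
apply: zero_one_cdf; first exact: TM (inM_dirac x).
move=> t; have := congr1 (fun G => G t) (dT _ (inM_dirac x)).
rewrite dirac_comp //= /twopt.
by case: (ltP (T (dirac_cdf x) t) 1) => _ <-; [left|right].
Qed.

Definition uT x := sval (cid (T_dirac x)).

Lemma T_diracE x : T (dirac_cdf x) = dirac_cdf (uT x).
Proof. exact: svalP (cid (T_dirac x)). Qed.

Lemma uT_increasing : increasing uT.
Proof.
move=> x y xy.
have xy_st : le_st (dirac_cdf x) (dirac_cdf y).
  by move=> t; rewrite /dirac_cdf; case: (ltP t x); case: (ltP t y) => *; lra.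
have := T_mono _ _ (inM_dirac x) (inM_dirac y) xy_st (uT y).
by rewrite !T_diracE /dirac_cdf ltxx; case: ltP => *; lra.
Qed.

Lemma T_twopt_bounds a b p t : a <= b -> 0 <= p <= 1 ->
  dirac_cdf (uT b) t <= T (twopt p a b) t <= dirac_cdf (uT a) t.
Proof.
move=> ab /andP[p0 p1]; have PM : inM (twopt p a b) by apply: inM_twopt; rewrite p0.
have Pb : le_st (twopt p a b) (dirac_cdf b).
  by move=> s; rewrite /twopt /dirac_cdf; case: (ltP s a); case: (ltP s b) => *; lra.
have aP : le_st (dirac_cdf a) (twopt p a b).
  by move=> s; rewrite /twopt /dirac_cdf; case: (ltP s a); case: (ltP s b) => *; lra.
by rewrite -!T_diracE (T_mono _ _ PM (inM_dirac b) Pb t) (T_mono _ _ (inM_dirac a) PM aP t).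
Qed.

Lemma T_twopt_pos a b p : 0 < p <= 1 -> 0 < T (twopt p a b) (uT a).
Proof.
move=> /andP[p0 p1]; have p01 : 0 <= p <= 1 by rewrite (ltW p0) p1.
have PM := inM_twopt p a b p01.
have hd : right_cont_distortion (twopt 1 p 1).
  by apply: (right_cont_distortion_twopt 1 p); rewrite ?p0 ?p1 ?lexx ?ler01.
have [e [[_ [_ [e0 _]]] _] eT] := TD_DT_comp hd; have [[_ [_ [h0 h1]]] _] := hd.
have := congr1 (fun G => G (uT a)) (eT _ PM).
rewrite /= twopt_comp // (_ : twopt 1 p 1 p = 1); last by rewrite /twopt ltxx; case: ifP.
rewrite twopt1 T_diracE /dirac_cdf ltxx => eT1.
rewrite lt0r (andP (inM_01 (TM _ PM) _)).1 andbT; apply/eqP => T0.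
by move: eT1; rewrite T0 e0 => /eqP; rewrite eq_sym oner_eq0.
Qed.

Lemma T_twopt_lt1 a b p t : a <= b -> 0 <= p < 1 -> t < uT b -> T (twopt p a b) t < 1.
Proof.
move=> ab /andP[p0 p1] tb; have p01 : 0 <= p <= 1 by rewrite p0 ltW.
have PM := inM_twopt p a b p01.
have hd : right_cont_distortion (twopt 0 1 1 : R -> R).
  by apply: (right_cont_distortion_twopt 0 1); rewrite ?ltr01 ?lexx ?ler01.
have [e [[_ [_ [_ e1]]] _] eT] := TD_DT_comp hd; have [[_ [_ [h0 h1]]] _] := hd.
have := congr1 (fun G => G t) (eT _ PM).
rewrite /= twopt_comp // twopt_lo // twopt0 // T_diracE /dirac_cdf tb => eT0.
rewrite lt_neqAle (andP (inM_01 (TM _ PM) t)).2 andbT; apply/eqP => T1.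
by move: eT0; rewrite T1 e1 => /eqP; rewrite oner_eq0.
Qed.

(* If [T P] took values [s1 < s2] in [(0, 1)] at [x1] and [x2], the
   distortions [twopt (1/2) s1 1] and [twopt 1 s2 1] of [T P] would be images
   of two-point laws with comparable weights, contradicting monotonicity at
   [x1] or at [x2]. *)
Lemma T_twopt_flat a b p x1 x2 : 0 <= p <= 1 ->
  0 < T (twopt p a b) x1 -> T (twopt p a b) x2 < 1 ->
  T (twopt p a b) x2 <= T (twopt p a b) x1.
Proof.
move=> p01 pos lt1; rewrite leNgt; apply/negP => incr.
have PM := inM_twopt p a b p01.
have hd1 : right_cont_distortion (twopt (1/2) (T (twopt p a b) x1) 1).
  by apply: (right_cont_distortion_twopt (1/2) (T (twopt p a b) x1)); apply/andP; split; lra.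
have hd2 : right_cont_distortion (twopt 1 (T (twopt p a b) x2) 1).
  by apply: (right_cont_distortion_twopt 1 (T (twopt p a b) x2)); apply/andP; split; lra.
have [d1 [[_ [d1_01 [d10 d11]]] _] dT1] := DT_TD_comp hd1.
have [d2 [[_ [d2_01 [d20 d21]]] _] dT2] := DT_TD_comp hd2.
have E1 := dT1 _ PM; rewrite twopt_comp // in E1.
have E2 := dT2 _ PM; rewrite twopt_comp // in E2.
have v11 : T (twopt (d1 p) a b) x1 = 1/2 by rewrite -E1 /= twopt_mid // lexx /=; lra.
have v21 : T (twopt (d2 p) a b) x1 = 0 by rewrite -E2 /= twopt_lo.
have v12 : T (twopt (d1 p) a b) x2 = 1/2 by rewrite -E1 /= twopt_mid // (ltW incr).
have v22 : T (twopt (d2 p) a b) x2 = 1 by rewrite -E2 /= twopt_mid // lexx.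
have d1p := d1_01 _ p01; have d2p := d2_01 _ p01.
case: (leP (d1 p) (d2 p)) => d12.
  by move: (T_twopt_mono a b x1 d1p d2p d12); rewrite v11 v21 => h; lra.
by move: (T_twopt_mono a b x2 d2p d1p (ltW d12)); rewrite v12 v22 => h; lra.
Qed.

Definition Tweight a b p := T (twopt p a b) (uT a).

Lemma T_twopt a b p : a <= b -> 0 <= p <= 1 ->
  T (twopt p a b) = twopt (Tweight a b p) (uT a) (uT b).
Proof.
move=> ab p01; have PM := inM_twopt p a b p01; have [Gi _] := TM _ PM.
have mid t : uT a <= t < uT b -> T (twopt p a b) t = Tweight a b p.
  move=> /andP[ta tb]; have /andP[p0 p1] := p01; rewrite /Tweight.
  have [->|pn0] := eqVneq p 0.
    by rewrite twopt0 // T_diracE /dirac_cdf tb (le_lt_trans ta tb).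
  have [->|pn1] := eqVneq p 1; first by rewrite twopt1 T_diracE /dirac_cdf ltxx ltNge ta.
  apply/eqP; rewrite eq_le (Gi _ _ ta) andbT; apply: T_twopt_flat => //.
    by apply: T_twopt_pos; rewrite lt0r pn0 p0 p1.
  by apply: T_twopt_lt1 => //; rewrite p0 lt_neqAle pn1 p1.
apply/funext => t; have /andP[lo hi] := T_twopt_bounds a b p t ab p01.
have /andP[G0 G1] := inM_01 (TM _ PM) t.
case: (ltP t (uT a)) => ta.
  by rewrite twopt_lo //; move: hi; rewrite /dirac_cdf ta => hi; lra.
case: (ltP t (uT b)) => tb; first by rewrite twopt_mid ?ta ?tb // mid ?ta.
by rewrite twopt_hi ?uT_increasing //; move: lo; rewrite /dirac_cdf ltNge tb /= => lo; lra.
Qed.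

Lemma Tweight0 a b : a <= b -> uT a < uT b -> Tweight a b 0 = 0.
Proof. by move=> ab uab; rewrite /Tweight twopt0 // T_diracE /dirac_cdf uab. Qed.

Lemma Tweight1 a b : Tweight a b 1 = 1.
Proof. by rewrite /Tweight twopt1 T_diracE /dirac_cdf ltxx. Qed.

Lemma Tweight_01 a b p : 0 <= p <= 1 -> 0 <= Tweight a b p <= 1.
Proof. by move=> p01; exact: inM_01 (TM _ (inM_twopt p a b p01)) (uT a). Qed.

Lemma Tweight_distort {d'} : right_cont_distortion d' ->
  exists e, forall a b p, 0 <= p <= 1 -> Tweight a b (d' p) = e (Tweight a b p).
Proof.
move=> hd'; have [e _ eT] := TD_DT_comp hd'; have [[_ [_ [d'0 d'1]]] _] := hd'.
exists e => a b p p01; have := congr1 (fun G => G (uT a)) (eT _ (inM_twopt p a b p01)).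
by rewrite /= twopt_comp // => ->.
Qed.

Lemma Tweight_undistort {e} : right_cont_distortion e ->
  exists2 d', right_cont_distortion d' &
    forall a b p, 0 <= p <= 1 -> e (Tweight a b p) = Tweight a b (d' p).
Proof.
move=> he; have [d' hd' d'T] := DT_TD_comp he; have [[_ [_ [d'0 d'1]]] _] := hd'.
exists d' => // a b p p01; have := congr1 (fun G => G (uT a)) (d'T _ (inM_twopt p a b p01)).
by rewrite /= twopt_comp.
Qed.

Lemma Tweight_strict {a b p q} : a <= b -> uT a < uT b -> 0 <= p -> p < q -> q <= 1 ->
  Tweight a b p < Tweight a b q.
Proof.
move=> ab uab p0 pq q1.
have p01 : 0 <= p <= 1 by apply/andP; split; lra.
have q01 : 0 <= q <= 1 by apply/andP; split; lra.
rewrite lt_neqAle (T_twopt_mono a b (uT a) p01 q01 (ltW pq)) andbT; apply/eqP => Epq.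
have hd : right_cont_distortion (twopt 1 q 1).
  by apply: (right_cont_distortion_twopt 1 q); rewrite ?lexx ?ler01 ?q1 ?(le_lt_trans p0 pq).
have tq : twopt 1 q 1 q = 1 by rewrite /twopt ltxx; case: ifP.
have [e eT] := Tweight_distort hd.
have := eT a b q q01; rewrite -Epq -eT // tq twopt_lo // Tweight1 Tweight0 //.
by move/eqP; rewrite oner_eq0.
Qed.

Lemma Tweight_inj {a b p q} : a <= b -> uT a < uT b -> 0 <= p <= 1 -> 0 <= q <= 1 ->
  Tweight a b p = Tweight a b q -> p = q.
Proof.
move=> ab uab /andP[p0 p1] /andP[q0 q1] E; apply/eqP; rewrite eq_le !leNgt.
apply/andP; split; apply/negP => lt.
  by have := Tweight_strict ab uab q0 lt p1; rewrite E ltxx.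
by have := Tweight_strict ab uab p0 lt q1; rewrite E ltxx.
Qed.

Lemma Tweight_onto {a b s} : a <= b -> uT a < uT b -> 0 <= s <= 1 ->
  exists2 r, 0 <= r <= 1 & Tweight a b r = s.
Proof.
move=> ab uab s01.
have h0 : (0 : R) < 1 / 2 by lra.
have h1 : (1 / 2 : R) < 1 by lra.
have half01 : 0 <= (1 / 2 : R) <= 1 by rewrite (ltW h0) (ltW h1).
have c0 := Tweight_strict ab uab (lexx 0) h0 (ltW h1); rewrite Tweight0 // in c0.
have c1 := Tweight_strict ab uab (ltW h0) h1 (lexx 1); rewrite Tweight1 in c1.
have he : right_cont_distortion (twopt s (Tweight a b (1 / 2)) 1).
  by apply: (right_cont_distortion_twopt s (Tweight a b (1 / 2))) => //; rewrite c0 ltW.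
have [d' [[_ [d'01 _]] _] d'T] := Tweight_undistort he.
exists (d' (1 / 2)); first exact: d'01.
by rewrite -d'T // twopt_mid // lexx c1.
Qed.

Lemma Tweight_indep {a b a' b' p} : a <= b -> uT a < uT b -> a' <= b' -> uT a' < uT b' ->
  0 <= p <= 1 -> Tweight a b p = Tweight a' b' p.
Proof.
move=> ab uab ab' uab' p01; have /andP[p0 p1] := p01.
have [->|pn0] := eqVneq p 0; first by rewrite !Tweight0.
have [->|pn1] := eqVneq p 1; first by rewrite !Tweight1.
have p_pos : 0 < p by rewrite lt0r pn0.
have p_lt1 : p < 1 by rewrite lt_neqAle pn1.
have hd : right_cont_distortion (twopt p p 1).
  by apply: (right_cont_distortion_twopt p p); rewrite ?p_pos ?p1 ?p0.
have [e eT] := Tweight_distort hd.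
have [r r01 Er] := Tweight_onto ab uab (Tweight_01 a' b' p p01).
(* Both weight functions intertwine [twopt p p 1] with the same [e], so [r]
   is a fixed point of [twopt p p 1]: one of [0], [p], [1], and the extreme
   ones are excluded by strict monotonicity. *)
have r_fix : twopt p p 1 r = r.
  apply: (Tweight_inj ab uab (inM_01 (inM_twopt p p 1 p01) r) r01).
  by rewrite eT // Er -eT // twopt_mid // lexx.
move: r_fix; rewrite /twopt; case: (ltP r p) => rp.
  move=> r0; move: Er; rewrite -r0 Tweight0 // => E0.
  by have := Tweight_strict ab' uab' (lexx 0) p_pos p1; rewrite Tweight0 // -E0 ltxx.
case: (ltP r 1) => r1 rE; first by rewrite {1}rE Er.
move: Er; rewrite -rE Tweight1 => E1.
by have := Tweight_strict ab' uab' p0 p_lt1 (lexx 1); rewrite Tweight1 -E1 ltxx.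
Qed.

Lemma T_twopt_distortion : exists d, strict_cont_distortion d /\
  forall a b p, a <= b -> 0 <= p <= 1 -> T (twopt p a b) = twopt (d p) (uT a) (uT b).
Proof.
have [[a0 [b0 [ab0 uab0]]]|uT_flat] := pselect (exists a b, a <= b /\ uT a < uT b).
  have dist : distortion (Tweight a0 b0).
    split; first by move=> p q p0 pq q1; apply: T_twopt_mono => //; apply/andP; split; lra.
    by split; [exact: Tweight_01 | rewrite Tweight0 // Tweight1].
  exists (Tweight a0 b0); split.
    split=> //; split; first by move=> p q; exact: Tweight_strict.
    by apply: onto_distortion_continuous => // s; exact: Tweight_onto.
  move=> a b p ab p01; rewrite T_twopt //.
  have := uT_increasing _ _ ab; rewrite le_eqVlt => /orP[/eqP ->|uab].
    by rewrite !twopt_same.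
  by rewrite (Tweight_indep ab uab ab0 uab0 p01).
have id_dist : distortion (@id R).
  by split; [move=> x y _ xy _ | split].
exists id; split.
  split=> //; split; first by move=> x y _ xy _.
  by apply: onto_distortion_continuous => // s s01; exists s.
move=> a b p ab p01; rewrite T_twopt //.
have := uT_increasing _ _ ab; rewrite le_eqVlt => /orP[/eqP ->|uab].
  by rewrite !twopt_same.
by exfalso; apply: uT_flat; exists a, b.
Qed.

Section with_distortion.
Variable d : R -> R.
Hypothesis d_sc : strict_cont_distortion d.
Hypothesis T_twopt_d : forall a b p, a <= b -> 0 <= p <= 1 ->
  T (twopt p a b) = twopt (d p) (uT a) (uT b).

Let d_mono {p q} : 0 <= p -> p <= q -> q <= 1 -> d p <= d q.
Proof. by case: d_sc => [[dm _] _]; exact: dm. Qed.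

Let d_01 {p} : 0 <= p <= 1 -> 0 <= d p <= 1.
Proof. by case: d_sc => [[_ [d01 _]] _]; exact: d01. Qed.

Let d0 : d 0 = 0. Proof. by case: d_sc => [[_ [_ []]]]. Qed.

Let d1 : d 1 = 1. Proof. by case: d_sc => [[_ [_ []]]]. Qed.

Let d_strict {p q} : 0 <= p -> p < q -> q <= 1 -> d p < d q.
Proof. by case: d_sc => [_ [ds _]]; exact: ds. Qed.

Let d_onto {s} : 0 <= s <= 1 -> exists2 r, 0 <= r <= 1 & d r = s.
Proof. exact: strict_cont_distortion_onto d_sc s. Qed.

Lemma T_ge_distort {F x y} : inM F -> uT x <= y -> d (F x) <= T F y.
Proof.
move=> FM uxy; have [Fi [_ [_ [b [_ Fb]]]]] := FM.
have xb : x <= Num.max b x by rewrite le_max lexx orbT.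
have below : le_st F (twopt (F x) x (Num.max b x)).
  move=> t; rewrite /twopt; case: (ltP t x) => tx; first by have /andP[] := inM_01 FM t.
  case: (ltP t (Num.max b x)) => tb; first exact: Fi.
  by rewrite Fb //; move: tb; rewrite ge_max => /andP[].
have := T_mono _ _ FM (inM_twopt _ x _ (inM_01 FM x)) below y.
rewrite T_twopt_d //; last exact: inM_01 FM x.
rewrite /twopt ltNge uxy /=; have /andP[_ dF1] := d_01 (inM_01 FM x).
by case: ifP => _ T_ge; lra.
Qed.

Lemma T_le_distort {F x y} : inM F -> y < uT x -> T F y <= d (left_lim F x).
Proof.
move=> FM yx; have [_ [_ [a [_ [Fa _]]]]] := FM.
have L01 := left_lim_01 FM x.
have ax : Num.min a (x - 1) <= x by rewrite ge_min; apply/orP; right; lra.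
have above : le_st (twopt (left_lim F x) (Num.min a (x - 1)) x) F.
  move=> t; rewrite /twopt; case: (ltP t (Num.min a (x - 1))) => ta.
    by rewrite Fa //; move: ta; rewrite lt_min => /andP[].
  case: (ltP t x) => tx; last by have /andP[] := inM_01 FM t.
  exact: left_lim_ge FM tx.
have := T_mono _ _ (inM_twopt _ _ x L01) FM above y.
rewrite T_twopt_d // /twopt yx; have /andP[dL0 _] := d_01 L01.
by case: ifP => _ T_le; lra.
Qed.

Lemma T_le_distort_right {F y} m : inM F -> (forall x, m < x -> y < uT x) ->
  T F y <= d (F m).
Proof.
move=> FM my; have [Fi [Frc _]] := FM.
rewrite leNgt; apply/negP => lt.
have [r /andP[r0 r1] dr] := d_onto (inM_01 (TM _ FM) y).
have Fmr : F m < r.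
  rewrite ltNge; apply/negP => rFm.
  by have := d_mono r0 rFm (andP (inM_01 FM m)).2; lra.
have /cvg_at_right_distP/(_ (r - F m)) [|del del0 Fdel] := Frc m; first by rewrite subr_gt0.
have mx : m < m + del / 2 < m + del by apply/andP; split; lra.
have Fmx : F m <= F (m + del / 2) by apply/Fi; lra.
have Fxr : F (m + del / 2) < r.
  by have := Fdel _ mx; rewrite ger0_norm ?subr_ge0 // => Fd; lra.
have Lx : left_lim F (m + del / 2) <= F (m + del / 2).
  by apply: left_lim_le => t /ltW; apply: Fi.
have L0 := (andP (left_lim_01 FM (m + del / 2))).1.
have dLr := d_strict L0 (le_lt_trans Lx Fxr) r1.
have := T_le_distort FM (my _ (andP mx).1); lra.
Qed.

Lemma d_Tu_le_T {F} y : inM F -> d (Tu uT F y) <= T F y.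
Proof.
move=> FM; rewrite leNgt; apply/negP => lt.
have /andP[s0 s1] := Tu_01 uT F y FM.
have [r /andP[r0 r1] dr] := d_onto (inM_01 (TM _ FM) y).
have rs : r < Tu uT F y.
  by rewrite ltNge; apply/negP => sr; have := d_mono s0 sr r1; lra.
have [[x0 ux0]|nox] := pselect (exists x, uT x <= y); last first.
  move: rs; rewrite Tu_empty; first lra.
  by move=> x; rewrite ltNge; apply/negP => ux; apply: nox; exists x.
have S0 : [set F x | x in [set x | uT x <= y]] !=set0 by exists (F x0), x0.
have [_ [x ux <-] rFx] := sup_gt S0 rs.
have := d_strict r0 rFx (andP (inM_01 FM x)).2; have := T_ge_distort FM ux.
lra.
Qed.

Lemma T_le_d_Tu {F} y : inM F -> T F y <= d (Tu uT F y).
Proof.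
move=> FM; have [_ [_ [a [b [Fa Fb]]]]] := FM.
have /andP[s0 s1] := Tu_01 uT F y FM.
have ds0 := (andP (d_01 (Tu_01 uT F y FM))).1.
have [[x0 ux0]|nox] := pselect (exists x, uT x <= y); last first.
  apply: le_trans (T_le_distort_right (a - 1) FM _) _; last by rewrite Fa ?d0 //; lra.
  by move=> x _; rewrite ltNge; apply/negP => ux; apply: nox; exists x.
have [[x [ux bx]]|bS] := pselect (exists x, uT x <= y /\ b <= x).
  by rewrite (Tu_one FM ux (Fb _ bx)) d1; exact: (andP (inM_01 (TM _ FM) y)).2.
have S0 : [set x | uT x <= y] !=set0 by exists x0.
have Sb : ubound [set x | uT x <= y] b.
  move=> x ux; rewrite leNgt; apply/negP => bx.
  by apply: bS; exists x; split => //; exact: ltW.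
set m := sup [set x | uT x <= y].
have [um|yum] := leP (uT m) y.
  apply: le_trans (T_le_distort_right m FM _) (d_mono _ (Tu_ge FM um) s1).
    move=> x mx; rewrite ltNge; apply/negP => ux.
    by have := ub_le_sup (ex_intro _ b Sb) ux; rewrite -/m; lra.
  by have /andP[] := inM_01 FM m.
apply: le_trans (T_le_distort FM yum) (d_mono _ _ s1).
  by have /andP[] := left_lim_01 FM m.
apply: left_lim_le => t tm; have [w /= uw tw] := sup_gt S0 tm.
exact: Tu_ge FM (le_trans (uT_increasing _ _ (ltW tw)) uw).
Qed.

Lemma T_distort_Tu {F} y : inM F -> T F y = d (Tu uT F y).
Proof. by move=> FM; apply/eqP; rewrite eq_le T_le_d_Tu ?d_Tu_le_T. Qed.

Lemma uT_left_cont x : uT y @[y --> x^'-] --> uT x.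
Proof.
apply/cvg_at_left_distP => e e0.
suff [t tx ut] : exists2 t, t < x & uT x - e < uT t.
  exists (x - t); first by rewrite subr_gt0.
  move=> y /andP[]; rewrite opprB subrKC => ty yx.
  have uty := uT_increasing _ _ (ltW ty); have uyx := uT_increasing _ _ (ltW yx).
  by rewrite ler0_norm ?subr_le0 //; lra.
apply: contrapT => no_t.
(* A jump of [uT] at [x] puts the whole uniform law on [[x - 1, x]] below the
   level [y0], so [T] maps it to [1] there, whereas its distortion by
   [twopt (1/2) (1/2) 1] is mapped below [1]: no distortion of the former
   yields the latter. *)
pose y0 := uT x - e / 2.
have y0x : y0 < uT x by rewrite /y0; lra.
have below t : t < x -> uT t <= y0.
  move=> tx; rewrite leNgt; apply/negP => ut; apply: no_t; exists t => //.
  by rewrite /y0 in ut; lra.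
have UM := inM_unif x.
have hh : right_cont_distortion (twopt (1 / 2) (1 / 2) 1 : R -> R).
  by apply: (right_cont_distortion_twopt (1 / 2) (1 / 2)); apply/andP; split; lra.
have HM := inM_comp hh UM.
have Tu_half : Tu uT (twopt (1 / 2) (1 / 2) 1 \o unif_cdf x) y0 <= 1 / 2.
  apply: (Tu_le_left uT_increasing y0x) => [|t tx /=]; first lra.
  have Ut : unif_cdf x t < 1 by rewrite /unif_cdf tx /=; case: (ltP t (x - 1)) => _; lra.
  by rewrite /twopt Ut /=; case: ifP => _; lra.
have [e1 [[_ [_ [_ e11]]] _] eT] := TD_DT_comp hh.
have := congr1 (fun G => G y0) (eT _ UM).
rewrite /= (T_distort_Tu y0 UM) (T_distort_Tu y0 HM) Tu_unif_cdf // d1 e11 => E.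
have /andP[h0 _] := Tu_01 uT _ y0 HM.
have h1 : Tu uT (twopt (1 / 2) (1 / 2) 1 \o unif_cdf x) y0 < 1 by lra.
by have := d_strict h0 h1 (lexx 1); rewrite -E d1 ltxx.
Qed.

End with_distortion.

Lemma necessity : exists u d, increasing u /\ (forall x, u y @[y --> x^'-] --> u x) /\
  strict_cont_distortion d /\ forall F, inM F -> T F = Td d (Tu u F).
Proof.
have [d [d_sc T_twopt_d]] := T_twopt_distortion.
exists uT, d; split; first exact: uT_increasing.
split; first exact: uT_left_cont d_sc T_twopt_d.
split=> // F FM; apply/funext => x; have [_ [TFrc _]] := TM _ FM.
rewrite /Td (_ : (fun y => d (Tu uT F y)) = T F); first exact/esym/cvg_lim.
by apply/funext => y; rewrite (T_distort_Tu _ d_sc T_twopt_d y FM).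
Qed.

End necessity.

Section sufficiency.
Context {R : realType}.
Variables (T : (R -> R) -> (R -> R)) (u d : R -> R).
Hypothesis TM : forall F, inM F -> inM (T F).
Hypothesis u_incr : increasing u.
Hypothesis u_lc : forall x, u y @[y --> x^'-] --> u x.
Hypothesis d_sc : strict_cont_distortion d.
Hypothesis T_Td_Tu : forall F, inM F -> T F = Td d (Tu u F).
Implicit Types (F h : R -> R).

Lemma T_compE F : inM F -> T F = d \o Tu u F.
Proof.
move=> FM; rewrite T_Td_Tu //; apply/funext => y; apply: TdE.
- exact: strict_cont_distortion_right_cont.
- by move=> z; exact: Tu_01.
- exact: Tu_increasing.
- exact: Tu_right_cont.
Qed.

Lemma T_distortE h F : right_cont_distortion h -> inM F -> T (h \o F) = d \o (h \o Tu u F).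
Proof.
move=> hh FM; rewrite T_compE; last exact: inM_comp.
by apply/funext => y /=; rewrite Tu_comp.
Qed.

Lemma sufficiency : DT_sub_TD T /\ TD_sub_DT T.
Proof.
have [g [hg dg gd]] := strict_cont_distortion_inv d_sc.
have d_rc := strict_cont_distortion_right_cont d_sc.
have [[_ [d01 _]] _] := d_rc.
split=> h hh; have [[_ [h01 _]] _] := hh.
  have hd := right_cont_distortion_comp (right_cont_distortion_comp hg hh) d_rc.
  exists (g \o h \o d); split=> // F FM.
  rewrite (Td_inM hh (TM _ FM)) (Td_inM hd FM) T_distortE // T_compE //.
  by apply/funext => y /=; rewrite dg // h01 // d01 // Tu_01.
have hd := right_cont_distortion_comp (right_cont_distortion_comp d_rc hh) hg.
exists (d \o h \o g); split=> // F FM.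
rewrite (Td_inM hd (TM _ FM)) (Td_inM hh FM) T_distortE // T_compE //.
by apply/funext => y /=; rewrite gd // Tu_01.
Qed.

End sufficiency.

Theorem theorem4 (R : realType) (T : (R -> R) -> (R -> R))
  (TM : forall F, inM F -> inM (T F))
  (Tmono : monotone_map T) :
  ( (* D^R o T subset T o D^R *)
    (forall d, right_cont_distortion d ->
       exists d', right_cont_distortion d' /\
         forall F, inM F -> Td d (T F) = T (Td d' F)) /\
    (* T o D^R subset D^R o T *)
    (forall d', right_cont_distortion d' ->
       exists d, right_cont_distortion d /\
         forall F, inM F -> Td d (T F) = T (Td d' F)) )
  <->
  (exists (u d : R -> R),
     increasing u /\ (forall x, u y @[y --> x^'-] --> u x) /\
     strict_cont_distortion d /\
     forall F, inM F -> T F = Td d (Tu u F)).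
Proof.
split=> [[DT_TD TD_DT]|[u [d [u_incr [u_lc [d_sc T_Td_Tu]]]]]].
  exact: necessity TM Tmono DT_TD TD_DT.
exact: sufficiency TM u_incr u_lc d_sc T_Td_Tu.
Qed.
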